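(* Let $G=(V,E)$ be a graph with $n$ vertices, $m$ edges and maximum degree $\Delta$, and let $c>0$ be the constant determining the threshold $\tau=(c+1)\log n$. The randomized variant of Procedure Edge-Coloring with parameter $h$ satisfying $\log\left(\Delta\cdot\frac{\log\log n}{4\log n}\right)\le h\le\log\Delta-2$ computes a proper $(\Delta+3\cdot2^h)$-edge-coloring of $G$ in $O\left(m\left(\frac{\Delta}{2^h}\right)^{18}+m\cdot h\right)$ time with probability at least $1-\frac{1}{n^c}$.
   Context: Logarithms are base 2. A proper $k$-edge-coloring is a map $\varphi:E\to\{1,\dots,k\}$ with distinct colors on distinct edges sharing an endpoint. A degree-splitting of $H$ with discrepancy $\kappa$ is a partition $(E_1,E_2)$ of $E(H)$ with $|\deg_{E_1}(v)-\deg_{E_2}(v)|\le\kappa$ for all $v$. Procedure Edge-Coloring$(H,h)$: if $h=0$, return a $(\Delta(H)+1)$-edge-coloring of $H$ with palette $\{1,\dots,\Delta(H)+1\}$ computed by a base-case subroutine. Otherwise compute in $O(|E(H)|)$ time a degree-splitting $(E_1,E_2)$ of $H$ with discrepancy at most 2 and $\{|E_1|,|E_2|\}=\{\lfloor |E(H)|/2\rfloor,\lceil |E(H)|/2\rceil\}$; let $H_1=(V(H),E_1)$, $H_2=(V(H),E_2)$ with isolated vertices discarded; compute $\varphi_1=$ Edge-Coloring$(H_1,h-1)$, $\varphi_2=$ Edge-Coloring$(H_2,h-1)$; return $\varphi=\varphi_1$ on $E_1$ and $\varphi=p_1+\varphi_2$ on $E_2$, where $p_1$ is the palette size of $\varphi_1$.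 Randomized variant: in the base case, for an input with $n'$ vertices, $m'$ edges and maximum degree $\Delta'$, if $n'\ge\tau$ a randomized algorithm is used that outputs a proper $(\Delta'+1)$-edge-coloring in $O(\Delta'^{18}n')$ time with probability at least $1-\Delta'^{-n'}$; otherwise a deterministic algorithm is used that outputs a proper $(\Delta'+1)$-edge-coloring in $O(m'\Delta'\log n')$ time. *)

From HB Require Import structures.
From mathcomp Require Import all_boot all_order all_algebra.
From mathcomp Require Import reals exp.
Set Implicit Arguments. Unset Strict Implicit. Unset Printing Implicit Defensive.
Import Order.TTheory GRing.Theory Num.Theory.
Local Open Scope ring_scope.

Definition log2 {R : realType} (x : R) : R := ln x / ln 2.

Section Graphs.
Variable T : finType.

Definition simple_graph (V : {set T}) (E : {set {set T}}) : bool :=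
  [forall e in E, (#|e| == 2)%N && (e \subset V)].

Definition deg (E : {set {set T}}) (v : T) : nat := #|[set e in E | v \in e]|.

Definition maxdeg (E : {set {set T}}) : nat := (\max_(v : T) deg E v)%N.

Definition proper_col (E : {set {set T}}) (k : nat) (phi : {set T} -> nat) : bool :=
  [forall e in E, (0 < phi e <= k)%N] &&
  [forall e in E, forall f in E,
      ((e != f) && ~~ [disjoint e & f]) ==> (phi e != phi f)].

Definition degree_splitting (E E1 E2 : {set {set T}}) (kappa : nat) : bool :=
  [&& E1 :|: E2 == E, [disjoint E1 & E2] &
      [forall v : T, (deg E1 v <= deg E2 v + kappa)%N &&
                     (deg E2 v <= deg E1 v + kappa)%N]].

Definition balanced_sizes (E E1 E2 : {set {set T}}) : bool :=
  ((#|E1| == #|E|./2) && (#|E2| == uphalf #|E|)) ||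
  ((#|E1| == uphalf #|E|) && (#|E2| == #|E|./2)).

End Graphs.

(* The randomized variant of Procedure Edge-Coloring.
   - split V E     = (E1, E2, cost) : the degree-splitting subroutine;
   - det V E       = (coloring, cost) : deterministic base-case algorithm;
   - rnd p V E w   = (coloring, cost) : randomized base-case algorithm, run on
                     the random outcome w (p = position of the call in the
                     recursion tree, so that different calls may use
                     independent parts of the randomness);
   - tau           = threshold.
   Returns (coloring, palette size, total cost). Isolated vertices are
   discarded in subgraphs (vertex set := cover of the edge set). *)
Section Procedure.
Variables (R : realType) (T : finType) (Omega : finType).
Variable split : {set T} -> {set {set T}} -> {set {set T}} * {set {set T}} * nat.
Variable det : {set T} -> {set {set T}} -> ({set T} -> nat) * nat.
Variable rnd : seq bool -> {set T} -> {set {set T}} -> Omega -> ({set T} -> nat) * nat.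
Variable tau : R.
Variable w : Omega.

Fixpoint edge_coloring (p : seq bool) (h : nat) (V : {set T}) (E : {set {set T}})
  : ({set T} -> nat) * nat * nat :=
  match h with
  | 0 =>
      let res := if tau <= #|V|%:R then rnd p V E w else det V E in
      (res.1, (maxdeg E).+1, res.2)
  | h'.+1 =>
      let: (E1, E2, cs) := split V E in
      let: (phi1, p1, c1) := edge_coloring (false :: p) h' (cover E1) E1 in
      let: (phi2, p2, c2) := edge_coloring (true :: p) h' (cover E2) E2 in
      (fun e => if e \in E1 then phi1 e else (p1 + phi2 e)%N,
       (p1 + p2)%N, (cs + c1 + c2)%N)
  end.
End Procedure.

Definition is_distr {R : realType} {Omega : finType} (P : {ffun Omega -> R}) : Prop :=
  (forall w, 0 <= P w) /\ \sum_(w : Omega) P w = 1.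

Definition Pr {R : realType} {Omega : finType} (P : {ffun Omega -> R})
  (A : pred Omega) : R := \sum_(w : Omega | A w) P w.

From HB Require Import structures.
From mathcomp Require Import all_boot all_order all_algebra.
From mathcomp Require Import reals exp.
From mathcomp Require Import ring lra zify.
Set Implicit Arguments. Unset Strict Implicit. Unset Printing Implicit Defensive.
Import Order.TTheory GRing.Theory Num.Theory.
Local Open Scope ring_scope.

(* After k levels of degree-splitting with discrepancy 2, every part F of the
   recursion keeps about m/2^k edges and has maximum degree about Delta/2^k
   ([level_inv]), so the leaf palettes of size Delta(F) + 1 add up to at most
   Delta + 3 * 2^h.  A leaf with at least tau vertices is colored by the
   randomized algorithm and fails with probability at most 2^-tau = n^-(c+1);
   since there are 2^h <= Delta <= n leaves, the union bound gives n^-c.  A leaf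
   with fewer than tau vertices forces n <= 2^(h+1) (tau (D + 2) + 1), where
   D = Delta/2^h; then log tau = O(sqrt (h + D)), so the deterministic cost
   m' Delta' log n' stays within O(m' (D^18 + h)). *)

Section Degrees.
Variable T : finType.
Implicit Types (F G H : {set {set T}}) (v : T).

Lemma deg_le_maxdeg F v : (deg F v <= maxdeg F)%N.
Proof. exact: leq_bigmax. Qed.

Lemma maxdeg_attained F : (0 < maxdeg F)%N -> exists v, deg F v = maxdeg F.
Proof.
case: (pickP (@predT T)) => [v0 _ _|noT]; last by rewrite /maxdeg big_pred0.
by exists [arg max_(v > v0) deg F v]; rewrite /maxdeg (bigop.bigmax_eq_arg v0).
Qed.

Lemma maxdeg_set0 : maxdeg (set0 : {set {set T}}) = 0%N.
Proof.
rewrite /maxdeg big1 // => v _; apply/eqP; rewrite cards_eq0; apply/eqP/setP => e.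
by rewrite !inE.
Qed.

Lemma deg_setU G H v : [disjoint G & H] -> deg (G :|: H) v = (deg G v + deg H v)%N.
Proof.
move=> dGH; rewrite /deg -cardsUI.
have -> : [set e in G :|: H | v \in e] = [set e in G | v \in e] :|: [set e in H | v \in e].
  by apply/setP => e; rewrite !inE andb_orl.
suff -> : [set e in G | v \in e] :&: [set e in H | v \in e] = set0 by rewrite cards0 addn0.
apply/setP => e; rewrite !inE; apply/negbTE; apply: contraTN dGH => /and3P[/andP[eG _] eH _].
by apply/pred0Pn; exists e; rewrite /= eG.
Qed.

Lemma card_cover_le F :
  {in F, forall e : {set T}, #|e| = 2%N} -> (#|cover F| <= 2 * #|F|)%N.
Proof.
move=> F2; rewrite (leq_trans (leq_card_cover F)) // (eq_bigr (fun=> 2%N)) //.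
by rewrite sum_nat_const mulnC.
Qed.

Lemma card_le_cover_maxdeg F : {in F, forall e : {set T}, #|e| = 2%N} ->
  (#|F| <= #|cover F| * maxdeg F)%N.
Proof.
move=> F2; set stars := [set [set e in F | v \in e] | v in cover F].
have sub : F \subset cover stars.
  apply/subsetP => e eF; have /card_gt0P[v ve] : (0 < #|e|)%N by rewrite F2.
  by rewrite cover_imset; apply/bigcupP; exists v; [apply/bigcupP; exists e | rewrite inE eF].
apply: leq_trans (subset_leq_card sub) (leq_trans (leq_card_cover stars) _).
apply: (@leq_trans (\sum_(A in stars) maxdeg F)).
  by apply: leq_sum => _ /imsetP[v _ ->]; apply: deg_le_maxdeg.
by rewrite sum_nat_const leq_mul2r leq_imset_card orbT.
Qed.

Lemma deg_le_card F v : {in F, forall e : {set T}, #|e| = 2%N} -> (deg F v <= #|T|)%N.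
Proof.
move=> F2; rewrite -cardsT; apply: leq_trans (leq_imset_card (fun x => [set v; x]) _).
apply: subset_leq_card; apply/subsetP => e; rewrite inE => /andP[eF].
have /cards2P[x [y [_ ->]]] : #|e| == 2%N by rewrite F2.
rewrite !inE => /orP[]/eqP->; apply/imsetP; [exists y | exists x] => //; exact: setUC.
Qed.

End Degrees.

Section Colorings.
Variable T : finType.
Implicit Types (F G H : {set {set T}}) (phi : {set T} -> nat).

Lemma proper_col_widen F k k' phi :
  (k <= k')%N -> proper_col F k phi -> proper_col F k' phi.
Proof.
move=> kk' /andP[/forall_inP range conflict]; apply/andP; split=> //.
apply/forall_inP => e eF.
by case/andP: (range e eF) => -> /leq_trans; apply.
Qed.

Lemma proper_col_setU G H k1 k2 phi1 phi2 : [disjoint G & H] ->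
  proper_col G k1 phi1 -> proper_col H k2 phi2 ->
  proper_col (G :|: H) (k1 + k2) (fun e => if e \in G then phi1 e else (k1 + phi2 e)%N).
Proof.
move=> dGH /andP[/forall_inP rng1 /forall_inP cf1] /andP[/forall_inP rng2 /forall_inP cf2].
have notG e : e \in H -> e \notin G.
  by move=> eH; apply: contraTN dGH => eG; apply/pred0Pn; exists e; rewrite /= eG.
have lt_shift e f : e \in G -> f \in H -> (phi1 e < k1 + phi2 f)%N.
  move=> eG fH; case/andP: (rng1 e eG) => _ /leq_ltn_trans; apply.
  by case/andP: (rng2 f fH); lia.
apply/andP; split.
  apply/forall_inP => e; rewrite inE => /orP[eG|eH].
    by rewrite eG; case/andP: (rng1 e eG) => -> /leq_trans; apply; rewrite leq_addr.
  rewrite (negbTE (notG e eH)); case/andP: (rng2 e eH) => p0 le.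
  by rewrite addn_gt0 p0 orbT leq_add2l.
apply/forall_inP => e; rewrite inE => eGH; apply/forall_inP => f; rewrite inE => fGH.
apply/implyP => /andP[nef ndis].
case/orP: eGH => [eG|eH]; case/orP: fGH => [fG|fH].
- by rewrite eG fG; move/forall_inP: (cf1 e eG) => /(_ f fG); rewrite nef ndis.
- by rewrite eG (negbTE (notG f fH)) ltn_eqF ?lt_shift.
- by rewrite fG (negbTE (notG e eH)) gtn_eqF ?lt_shift.
- rewrite (negbTE (notG e eH)) (negbTE (notG f fH)) eqn_add2l.
  by move/forall_inP: (cf2 e eH) => /(_ f fH); rewrite nef ndis.
Qed.

End Colorings.

Section FiniteProbability.
Variables (R : realType) (Omega : finType) (P : {ffun Omega -> R}).
Hypothesis P_distr : is_distr P.
Implicit Types A B : pred Omega.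

Lemma le_Pr A B : (forall w, A w -> B w) -> Pr P A <= Pr P B.
Proof.
move=> AB; rewrite /Pr [leRHS]big_mkcond [leLHS]big_mkcond /=.
apply: ler_sum => w _; case Aw: (A w); first by rewrite AB.
by case: (B w) => //; case: P_distr.
Qed.

Lemma Pr_predC A : Pr P (predC A) = 1 - Pr P A.
Proof. by case: P_distr => _ <-; rewrite /Pr (bigID A predT) /= addrC addrK. Qed.

Lemma Pr_predU A B : Pr P (predU A B) <= Pr P A + Pr P B.
Proof.
rewrite /Pr big_mkcond [X in _ <= X + _]big_mkcond [X in _ <= _ + X]big_mkcond.
rewrite -big_split /=; apply: ler_sum => w _; case: P_distr => P0 _; have := P0 w.
by case: (A w); case: (B w) => /=; lra.
Qed.

Lemma Pr_pred0 A : (forall w, ~~ A w) -> Pr P A = 0.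
Proof. by move=> A0; rewrite /Pr big1 // => w; rewrite (negbTE (A0 w)). Qed.

End FiniteProbability.

Section LevelInvariant.
Variables (T : finType) (E : {set {set T}}).
Implicit Types F : {set {set T}}.

(* Cleared of denominators: after k splits of discrepancy 2, a part F keeps
   |F| >= |E|/2^k - 1 edges, has Delta(F) <= (Delta(E) - 2)/2^k + 2, and
   contains a vertex of degree >= (Delta(E) + 2)/2^k - 2. *)
Definition level_inv (k : nat) F : bool :=
  [&& F \subset E, (#|E| <= (#|F| + 1) * 2 ^ k)%N,
      (maxdeg F * 2 ^ k + 2 <= maxdeg E + 2 * 2 ^ k)%N &
      [exists v, (maxdeg E + 2 <= deg F v * 2 ^ k + 2 * 2 ^ k)%N]].

Lemma level_inv_split k F F1 F2 : level_inv k F ->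
  F1 :|: F2 = F -> [disjoint F1 & F2] ->
  (forall v, deg F1 v <= deg F2 v + 2 /\ deg F2 v <= deg F1 v + 2)%N ->
  (#|F|./2 <= #|F1|)%N -> level_inv k.+1 F1.
Proof.
move=> /and4P[sFE sizeF degF /existsP[v degFv]] UF dF12 disc halfF1.
have degU u : deg F u = (deg F1 u + deg F2 u)%N by rewrite -UF deg_setU.
rewrite /level_inv expnS; set t := (2 ^ k)%N; apply/and4P; split.
- by apply: subset_trans sFE; rewrite -UF subsetUl.
- have := odd_double_half #|F|; rewrite -muln2; set a := #|F|./2 => oddF.
  have : (#|F| <= a * 2 + 1)%N by rewrite -{1}oddF addnC leq_add2l leq_b1.
  by nia.
- suff : (maxdeg F1 <= (maxdeg F + 2) %/ 2)%N.
    by rewrite leq_divRL // => le1; nia.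
  case: (posnP (maxdeg F1)) => [->//|/maxdeg_attained[u <-]].
  have := deg_le_maxdeg F u; rewrite degU leq_divRL //; case: (disc u); lia.
- apply/existsP; exists v; move: degFv; rewrite degU; case: (disc v) => _.
  by nia.
Qed.

End LevelInvariant.

Section Recursion.
Variables (R : realType) (T Omega : finType) (P : {ffun Omega -> R}).
Variable split : {set T} -> {set {set T}} -> {set {set T}} * {set {set T}} * nat.
Variable det : {set T} -> {set {set T}} -> ({set T} -> nat) * nat.
Variable rnd : seq bool -> {set T} -> {set {set T}} -> Omega -> ({set T} -> nat) * nat.
Variables (tau : R) (E : {set {set T}}) (h : nat) (K1 leaf_cost eps : R).
Implicit Types F : {set {set T}}.

Hypothesis P_distr : is_distr P.
Hypothesis E_simple : simple_graph [set: T] E.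
Hypothesis split_spec : forall V F, simple_graph V F ->
  let: (F1, F2, cs) := split V F in
  [/\ degree_splitting F F1 F2 2, balanced_sizes F F1 F2 & (cs%:R <= K1 * #|F|%:R :> R)].

Definition run w p j F := edge_coloring split det rnd tau w p j (cover F) F.

Definition run_ok j p F w : bool :=
  let: (phi, pal, cs) := run w p j F in
  proper_col F pal phi && (cs%:R <= K1 * #|F|%:R * j%:R + leaf_cost * #|F|%:R).

Lemma sub_simple_graph F : F \subset E -> simple_graph (cover F) F.
Proof.
move=> sFE; apply/forall_inP => e eF.
move/forall_inP: E_simple => /(_ e (subsetP sFE e eF)).
by case/andP=> -> _; apply/subsetP => x xe; apply/bigcupP; exists e.
Qed.

Lemma split_level_inv k F F1 F2 cs : level_inv E k F ->
  split (cover F) F = (F1, F2, cs) ->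
  [/\ F1 :|: F2 = F, [disjoint F1 & F2], level_inv E k.+1 F1, level_inv E k.+1 F2
    & cs%:R <= K1 * #|F|%:R].
Proof.
move=> invF splitF; have sFE : F \subset E by case/and4P: invF.
move: (split_spec (sub_simple_graph sFE)); rewrite splitF.
case=> /and3P[/eqP UF dF12 /forallP disc] bal cost.
have half12 : (#|F|./2 <= #|F1|)%N /\ (#|F|./2 <= #|F2|)%N.
  by case/orP: bal => /andP[/eqP -> /eqP ->]; rewrite leqnn uphalf_half leq_addl.
split=> //.
- by apply: level_inv_split invF UF dF12 _ half12.1 => v; case/andP: (disc v).
- rewrite setUC in UF; rewrite disjoint_sym in dF12.
  by apply: level_inv_split invF UF dF12 _ half12.2 => v; case/andP: (disc v).
Qed.

Lemma run0 w p F : run w p 0 F =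
  let res := if tau <= #|cover F|%:R then rnd p (cover F) F w else det (cover F) F in
  (res.1, (maxdeg F).+1, res.2).
Proof. by []. Qed.

Lemma run_succ w p j F : run w p j.+1 F =
  let: (F1, F2, cs) := split (cover F) F in
  let: (phi1, p1, c1) := run w (false :: p) j F1 in
  let: (phi2, p2, c2) := run w (true :: p) j F2 in
  (fun e => if e \in F1 then phi1 e else (p1 + phi2 e)%N, (p1 + p2)%N, (cs + c1 + c2)%N).
Proof. by []. Qed.

Lemma run_palette j : forall k p F w, (k + j = h)%N -> level_inv E k F ->
  ((run w p j F).1.2 * 2 ^ k <= maxdeg E + 3 * 2 ^ h)%N.
Proof.
elim: j => [|j IHj] k p F w.
  rewrite addn0 => <- /and4P[_ _ degF _] /=; lia.
rewrite addnS -addSn => kjh invF; rewrite run_succ.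
case splitF: split => [[F1 F2] cs].
have [_ _ inv1 inv2 _] := split_level_inv invF splitF.
have := IHj _ (false :: p) _ w kjh inv1; have := IHj _ (true :: p) _ w kjh inv2.
case: run => [[phi1 p1] c1]; case: run => [[phi2 p2] c2] /=.
rewrite expnS => pal2 pal1; rewrite -(@leq_pmul2l 2) //; lia.
Qed.

Hypothesis leaf_failure_le : forall p F, level_inv E h F -> Pr P (predC (run_ok 0 p F)) <= eps.

Lemma run_failure j : forall k p F, (k + j = h)%N -> level_inv E k F ->
  Pr P (predC (run_ok j p F)) <= 2 ^+ j * eps.
Proof.
elim: j => [|j IHj] k p F; first by rewrite addn0 => ->; rewrite mul1r; apply: leaf_failure_le.
rewrite addnS -addSn => kjh invF.
case splitF: (split (cover F) F) => [[F1 F2] cs].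
have [UF dF12 inv1 inv2 cost] := split_level_inv invF splitF.
have fail1 := IHj _ (false :: p) _ kjh inv1; have fail2 := IHj _ (true :: p) _ kjh inv2.
apply: le_trans (_ : Pr P (predU (predC (run_ok j (false :: p) F1))
                                 (predC (run_ok j (true :: p) F2))) <= _).
  apply: le_Pr => // w; apply: contraNT; rewrite /= negb_or !negbK /run_ok run_succ splitF.
  case: run => [[phi1 p1] c1]; case: run => [[phi2 p2] c2].
  case/andP=> /andP[col1 cost1] /andP[col2 cost2]; rewrite -UF proper_col_setU //=.
  have cardU : #|F1 :|: F2| = (#|F1| + #|F2|)%N by apply/eqP; rewrite (leq_card_setU _ _).2.
  rewrite -UF cardU in cost *.
  rewrite -[j.+1]addn1 !natrD; nra.
by apply: le_trans (Pr_predU P_distr _ _) _; rewrite exprS; lra.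
Qed.

End Recursion.

Section Log2.
Variable R : realType.
Implicit Types x y : R.

Lemma ln2_gt0 : 0 < ln (2 : R).
Proof. by apply: ln_gt0; rewrite ltr1n. Qed.

Lemma log2_ge0 x : 1 <= x -> 0 <= log2 x.
Proof. by move=> x1; apply: divr_ge0; [exact: ln_ge0 | exact: ltW ln2_gt0]. Qed.

Lemma ler_log2 : {in Num.pos &, {mono (@log2 R) : x y / x <= y}}.
Proof. by move=> x y x0 y0; rewrite ler_pM2r ?invr_gt0 ?ln2_gt0 ?ler_ln. Qed.

Lemma log2M : {in Num.pos &, {morph (@log2 R) : x y / x * y >-> x + y}}.
Proof. by move=> x y x0 y0; rewrite /log2 lnM // mulrDl. Qed.

Lemma log2_exp2 k : log2 (2 ^+ k : R) = k%:R.
Proof. by rewrite /log2 lnXn // mulrnAl mulfV // gt_eqF // ln2_gt0. Qed.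

Lemma log2_powR x a : log2 (powR x a) = a * log2 x.
Proof. by rewrite /log2 ln_powR mulrA. Qed.

Lemma log2_1Dx_le x : 0 <= x -> log2 (1 + x) <= x / ln 2.
Proof. by move=> x0; rewrite ler_pM2r ?invr_gt0 ?ln2_gt0 ?le_ln1Dx //; lra. Qed.

Lemma sqr_ln_le x : 1 <= x -> ln x ^+ 2 <= 2 * x.
Proof.
move=> x1; have := expR_ge1Dxn 1 (ln_ge0 x1); rewrite lnK ?posrE; last by lra.
have -> : 2`!%:R = 2 :> R by [].
by lra.
Qed.

Lemma expn2_le_of_log2 (k d : nat) :
  (0 < k)%N -> k%:R <= log2 (d%:R : R) -> (2 ^ k <= d)%N.
Proof.
move=> k0; case: (posnP d) => [->|d0].
  by rewrite /log2 ln0 // mul0r lern0 => /eqP k_0; rewrite k_0 in k0.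
by rewrite -(log2_exp2 k) ler_log2 ?posrE ?exprn_gt0 ?ltr0n // -natrX ler_nat.
Qed.

End Log2.

Section LogLogBound.
Variable R : realType.

Definition loglog_const (c : R) : R :=
  let a := (c + 1) / ln 2 ^+ 2 in 5 + 2 * a + 2 * a ^+ 2 + 6 * a / ln 2.

Lemma loglog_const_ge0 (c : R) : 0 <= c -> 0 <= loglog_const c.
Proof.
move=> c0; rewrite /loglog_const; set a := _ / _.
have a0 : 0 <= a by rewrite divr_ge0 ?sqr_ge0 //; lra.
have : 0 <= 6 * a / ln 2 by apply: divr_ge0; [rewrite mulr_ge0 | exact: ltW (ln2_gt0 R)].
by have := sqr_ge0 a; lra.
Qed.

Lemma log2_nat_ge1 (n : nat) : (2 <= n)%N -> 1 <= log2 (n%:R : R).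
Proof.
move=> n2; apply: le_trans (_ : log2 (2 ^+ 1) <= _); first by rewrite log2_exp2.
by rewrite ler_log2 ?posrE ?ltr0n ?expr1 ?ler_nat //; lia.
Qed.

Lemma log2_le_of_det_leaf (c D : R) (n h : nat) : 0 <= c -> (2 <= n)%N -> 0 <= D ->
  let tau := (c + 1) * log2 (n%:R : R) in
  n%:R <= 2 ^+ h.+1 * (tau * (D + 2) + 1) ->
  log2 (n%:R : R) <= h.+1%:R + log2 tau + (D + 2) / ln 2.
Proof.
move=> c0 n2 D0 tau cond; have := log2_nat_ge1 n2; rewrite -/tau => logn1.
have tau1 : 1 <= tau by rewrite /tau; nra.
clearbody tau.
have {}cond : n%:R <= 2 ^+ h.+1 * (tau * (1 + (D + 2))).
  by apply: le_trans cond _; rewrite ler_wpM2l ?exprn_ge0 //; nra.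
have pos2 : (0 : R) < 2 ^+ h.+1 by rewrite exprn_gt0.
rewrite -ler_log2 ?posrE ?ltr0n in cond; last 2 first.
- by lia.
- by rewrite !mulr_gt0 //; lra.
apply: le_trans cond _; rewrite !log2M ?posrE ?mulr_gt0 //; try lra.
by rewrite log2_exp2 -addrA lerD2l lerD2l log2_1Dx_le //; lra.
Qed.

Lemma loglog_bound (c D : R) (n h : nat) : 0 < c -> (2 <= n)%N -> 1 <= D ->
  let tau := (c + 1) * log2 (n%:R : R) in
  n%:R <= 2 ^+ h.+1 * (tau * (D + 2) + 1) ->
  (D + 2) * log2 tau <= loglog_const c * (D ^+ 18 + h%:R).
Proof.
move=> c0 n2 D1 tau cond.
have tau1 : 1 <= tau by have := log2_nat_ge1 n2; rewrite /tau; nra.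
have logn := log2_le_of_det_leaf (ltW c0) n2 (ltW (lt_le_trans ltr01 D1)) cond.
rewrite /loglog_const; set L := log2 tau; set mu := (ln (2 : R))^-1.
set q := c + 1; set a := q / ln 2 ^+ 2; set X := D ^+ 18.
have mu0 : 0 < mu by rewrite invr_gt0 ln2_gt0.
have q0 : 0 <= q by rewrite /q; lra.
have a_mu : a = q * mu ^+ 2 by rewrite /a exprVn.
have a0 : 0 <= a by rewrite a_mu mulr_ge0 ?sqr_ge0.
(* [L^2] is at most linear in [tau], which is at most linear in [h], [L] and [D];
   solving for [L^2] and applying AM-GM to [(D + 2) L] gives the bound. *)
have L2 : L ^+ 2 <= mu ^+ 2 * (2 * tau).
  have -> : L ^+ 2 = mu ^+ 2 * ln tau ^+ 2 by rewrite /L /log2 exprMn mulrC.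
  by rewrite ler_wpM2l ?sqr_ge0 ?sqr_ln_le.
have tau_le : mu ^+ 2 * (2 * tau) <= 2 * a * (h.+1%:R + L + (D + 2) * mu).
  have -> : 2 * a * (h.+1%:R + L + (D + 2) * mu) =
            mu ^+ 2 * (2 * (q * (h.+1%:R + L + (D + 2) * mu))) by rewrite a_mu; ring.
  by rewrite ler_wpM2l ?sqr_ge0 // ler_wpM2l // /tau ler_wpM2l.
clearbody L mu a.
have L2' : L ^+ 2 <= 4 * a * h.+1%:R + 4 * a ^+ 2 + 4 * mu * a * (D + 2).
  have sq : (L - 2 * a) ^+ 2 = L ^+ 2 - 4 * a * L + 4 * a ^+ 2 by ring.
  by have := sqr_ge0 (L - 2 * a); rewrite sq; lra.
have DX : D <= X by rewrite ler_eXnr.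
have D2X : (D + 2) ^+ 2 <= 9 * X.
  have : D ^+ 2 <= X by apply: ler_weXn2l.
  by nra.
have aX : a <= a * X by rewrite ler_peMr //; lra.
have a2X : a ^+ 2 <= a ^+ 2 * X by rewrite ler_peMr ?exprn_ge0 //; lra.
have muaX : mu * a * (D + 2) <= mu * a * (3 * X) by rewrite ler_wpM2l ?mulr_ge0 //; lra.
have : (D + 2) * L <= (D + 2) ^+ 2 / 2 + L ^+ 2 / 2.
  have sq : (D + 2 - L) ^+ 2 = (D + 2) ^+ 2 - 2 * (D + 2) * L + L ^+ 2 by ring.
  by have := sqr_ge0 (D + 2 - L); rewrite sq; lra.
have h0 : (0 : R) <= h%:R := ler0n _ h.
have a2h : 0 <= a ^+ 2 * h%:R by rewrite mulr_ge0 ?sqr_ge0.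
have amuh : 0 <= a * mu * h%:R by rewrite !mulr_ge0 // ltW.
rewrite -[h.+1]addn1 natrD in L2'.
by lra.
Qed.

End LogLogBound.

Definition edge_coloring_const (R : realType) (c K1 K2 K3 : R) : R :=
  `|K1| + (2 ^+ 19 * `|K2| + `|K3| * loglog_const c).

Section RandomizedEdgeColoring.
Variables (R : realType) (c K1 K2 K3 : R) (T Omega : finType).
Variables (E : {set {set T}}) (P : {ffun Omega -> R}) (h : nat).
Variable split : {set T} -> {set {set T}} -> {set {set T}} * {set {set T}} * nat.
Variable det : {set T} -> {set {set T}} -> ({set T} -> nat) * nat.
Variable rnd : seq bool -> {set T} -> {set {set T}} -> Omega -> ({set T} -> nat) * nat.
Implicit Types F : {set {set T}}.

Local Notation n := #|T|.
Local Notation m := #|E|.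
Local Notation Delta := (maxdeg E).
Local Notation tau := ((c + 1) * log2 (n%:R : R)).
Local Notation D := (Delta%:R / 2 ^+ h : R).

Hypothesis c_gt0 : 0 < c.
Hypothesis E_simple : simple_graph [set: T] E.
Hypothesis E_cover : cover E = [set: T].
Hypothesis P_distr : is_distr P.
Hypothesis split_spec : forall V F, simple_graph V F ->
  let: (F1, F2, cs) := split V F in
  [/\ degree_splitting F F1 F2 2, balanced_sizes F F1 F2 & (cs%:R <= K1 * #|F|%:R :> R)].
Hypothesis det_spec : forall V F, simple_graph V F -> F != set0 ->
  let: (phi, cs) := det V F in
  proper_col F (maxdeg F).+1 phi /\
  (cs%:R <= K3 * #|F|%:R * (maxdeg F)%:R * log2 (#|V|%:R) :> R).
Hypothesis rnd_spec : forall p V F, simple_graph V F -> F != set0 ->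
  Pr P [pred w | proper_col F (maxdeg F).+1 (rnd p V F w).1 &&
                 ((rnd p V F w).2%:R <= K2 * (maxdeg F)%:R ^+ 18 * #|V|%:R)]
  >= 1 - (maxdeg F)%:R ^- #|V|.
Hypothesis h_le : (h%:R : R) <= log2 (Delta%:R) - 2.

Let leaf_cost : R := (2 ^+ 19 * `|K2| + `|K3| * loglog_const c) * (D ^+ 18 + h%:R).
Let eps : R := (n%:R * powR n%:R c)^-1.

Lemma edge_card2 : {in E, forall e : {set T}, #|e| = 2%N}.
Proof. by move=> e eE; move/forall_inP: E_simple => /(_ e eE) /andP[/eqP]. Qed.

Lemma exp2_le_maxdeg : (2 ^ h.+2 <= Delta)%N.
Proof. by apply: expn2_le_of_log2 => //; rewrite -addn2 natrD -lerBrDr; exact: h_le. Qed.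

Lemma D_ge4 : 4 <= D.
Proof.
rewrite ler_pdivlMr; last exact: exprn_gt0.
by have := exp2_le_maxdeg; rewrite -(ler_nat R) !expnS !natrM natrX mulrA; lra.
Qed.

Lemma card_bounds : [/\ (2 <= n)%N, (Delta <= n)%N & (n <= 2 * m)%N].
Proof.
have Delta0 : (0 < Delta)%N by rewrite (leq_trans _ exp2_le_maxdeg) ?expn_gt0.
have [v degv] := maxdeg_attained Delta0.
split.
- have /card_gt0P[e] : (0 < deg E v)%N by rewrite degv.
  by rewrite inE => /andP[eE _]; rewrite -(edge_card2 eE) max_card.
- by rewrite -degv; apply: deg_le_card; exact: edge_card2.
- by rewrite -cardsT -E_cover; apply: card_cover_le; exact: edge_card2.
Qed.

Lemma leaf_maxdeg F : level_inv E h F -> (3 <= maxdeg F)%N /\ (maxdeg F)%:R <= D + 2.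
Proof.
case/and4P => _ _ degF /existsP[v degv]; have Dh := exp2_le_maxdeg; rewrite !expnS in Dh.
split; first by have := deg_le_maxdeg F v; nia.
have pos : (0 : R) < 2 ^+ h by exact: exprn_gt0.
rewrite -(ler_pM2r pos) mulrDl mulfVK ?gt_eqF //.
by move: degF; rewrite -(ler_nat R) !natrD !natrM natrX; lra.
Qed.

Lemma leaf_sizes F : level_inv E h F ->
  [/\ F != set0, #|cover F| <= 2 * #|F|, #|F| <= #|cover F| * maxdeg F
     & #|E| <= (#|F| + 1) * 2 ^ h]%N.
Proof.
move=> invF; have [deg3 _] := leaf_maxdeg invF; case/and4P: invF => sFE sizeF _ _.
have F2 : {in F, forall e : {set T}, #|e| = 2%N} by move=> e /(subsetP sFE); apply: edge_card2.
split; [|exact: card_cover_le|exact: card_le_cover_maxdeg|by []].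
by apply: contraTneq deg3 => ->; rewrite maxdeg_set0.
Qed.

Lemma rnd_leaf_cost F : level_inv E h F ->
  K2 * (maxdeg F)%:R ^+ 18 * #|cover F|%:R <= leaf_cost * #|F|%:R.
Proof.
move=> invF; have [_ degF] := leaf_maxdeg invF; have [_ coverF _ _] := leaf_sizes invF.
have D4 := D_ge4.
have {}coverF : (#|cover F|%:R : R) <= 2 * #|F|%:R by rewrite -natrM ler_nat.
have degF18 : (maxdeg F)%:R ^+ 18 <= 2 ^+ 18 * D ^+ 18.
  by rewrite -exprMn lerXn2r ?nnegrE //; lra.
apply: (@le_trans _ _ (`|K2| * (maxdeg F)%:R ^+ 18 * #|cover F|%:R)).
  by rewrite ler_wpM2r // ler_wpM2r ?exprn_ge0 // ler_norm.
apply: (@le_trans _ _ (`|K2| * (2 ^+ 18 * D ^+ 18) * (2 * #|F|%:R))).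
  by apply: ler_pM; rewrite ?mulr_ge0 ?exprn_ge0 // ler_wpM2l.
have -> : `|K2| * (2 ^+ 18 * D ^+ 18) * (2 * #|F|%:R) = 2 ^+ 19 * `|K2| * D ^+ 18 * #|F|%:R.
  by rewrite exprS; ring.
rewrite ler_wpM2r // /leaf_cost.
have kc := loglog_const_ge0 (ltW c_gt0).
have X0 : 0 <= D ^+ 18 by rewrite exprn_ge0 //; lra.
have k2h : 0 <= 2 ^+ 19 * `|K2| * h%:R by rewrite !mulr_ge0 ?exprn_ge0.
have k3 : 0 <= `|K3| * loglog_const c * (D ^+ 18 + h%:R).
  by apply: mulr_ge0; [exact: mulr_ge0 | exact: addr_ge0].
by lra.
Qed.

Lemma det_leaf_n_le F : level_inv E h F -> #|cover F|%:R < tau ->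
  n%:R <= 2 ^+ h.+1 * (tau * (D + 2) + 1).
Proof.
move=> invF small; have [_ degF] := leaf_maxdeg invF.
have [_ _ edgesF sizeE] := leaf_sizes invF; have [_ _ nm] := card_bounds.
have pos : (0 : R) < 2 ^+ h by exact: exprn_gt0.
have {}nm : (n%:R : R) <= 2 * m%:R by rewrite -natrM ler_nat.
have {}sizeE : (m%:R : R) <= (#|F|%:R + 1) * 2 ^+ h by rewrite natr1 -natrX -natrM ler_nat -addn1.
have {}edgesF : (#|F|%:R : R) <= #|cover F|%:R * (maxdeg F)%:R by rewrite -natrM ler_nat.
have : (#|cover F|%:R : R) * (maxdeg F)%:R <= tau * (D + 2).
  by apply: ler_pM => //; exact: ltW.
rewrite exprS; nra.
Qed.

Lemma det_leaf_cost F : level_inv E h F -> #|cover F|%:R < tau ->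
  K3 * #|F|%:R * (maxdeg F)%:R * log2 (#|cover F|%:R) <= leaf_cost * #|F|%:R.
Proof.
move=> invF small; have [_ degF] := leaf_maxdeg invF; have [F0 _ edgesF _] := leaf_sizes invF.
have [n2 _ _] := card_bounds; have D4 := D_ge4.
have cover1 : (1 <= #|cover F|)%N.
  by move: edgesF; rewrite lt0n; apply: contraTneq => ->; rewrite mul0n leqn0 cards_eq0.
have lg0 : 0 <= log2 (#|cover F|%:R : R) by apply: log2_ge0; rewrite ler1n.
have n'0 : (0 : R) < #|cover F|%:R by rewrite ltr0n.
have lg : log2 (#|cover F|%:R : R) <= log2 tau.
  by rewrite ler_log2 ?posrE ?(lt_trans n'0 small) // ltW.
have D1 : 1 <= D by lra.
have key := loglog_bound c_gt0 n2 D1 (det_leaf_n_le invF small).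
have deglog : (maxdeg F)%:R * log2 (#|cover F|%:R) <= loglog_const c * (D ^+ 18 + h%:R).
  by apply: le_trans key; apply: ler_pM.
have F'0 : (0 : R) <= `|K3| * #|F|%:R by rewrite mulr_ge0.
apply: (@le_trans _ _ (`|K3| * #|F|%:R * ((maxdeg F)%:R * log2 (#|cover F|%:R)))).
  by rewrite [leRHS]mulrA ler_wpM2r // ler_wpM2r // ler_wpM2r // ler_norm.
apply: le_trans (ler_wpM2l F'0 deglog) _.
have -> : leaf_cost * #|F|%:R = `|K3| * #|F|%:R * (loglog_const c * (D ^+ 18 + h%:R))
                              + 2 ^+ 19 * `|K2| * (D ^+ 18 + h%:R) * #|F|%:R.
  by rewrite /leaf_cost; ring.
by rewrite lerDl !mulr_ge0 ?addr_ge0 ?exprn_ge0 //; lra.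
Qed.

Lemma rnd_leaf_failure F : level_inv E h F -> tau <= #|cover F|%:R ->
  (maxdeg F)%:R ^- #|cover F| <= eps.
Proof.
move=> invF large; have [deg3 _] := leaf_maxdeg invF; have [n2 _ _] := card_bounds.
have n0 : (0 : R) < n%:R by rewrite ltr0n; lia.
have ncpos : 0 < n%:R * powR n%:R c by rewrite mulr_gt0 ?powR_gt0.
have nc_tau : log2 (n%:R * powR n%:R c) = tau.
  by rewrite log2M ?posrE ?powR_gt0 // log2_powR; ring.
have nc_le : n%:R * powR n%:R c <= 2 ^+ #|cover F|.
  by rewrite -ler_log2 ?posrE ?exprn_gt0 // nc_tau log2_exp2.
rewrite /eps lef_pV2 ?posrE ?exprn_gt0 ?ltr0n //; last by lia.
by apply: le_trans nc_le _; rewrite lerXn2r ?nnegrE ?ler_nat //; lia.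
Qed.

Lemma leaf_failure p F : level_inv E h F ->
  Pr P (predC (run_ok split det rnd tau K1 leaf_cost 0 p F)) <= eps.
Proof.
move=> invF; have [F0 _ _ _] := leaf_sizes invF.
have /(sub_simple_graph E_simple) simpleF : F \subset E by case/and4P: invF.
case large: (tau <= #|cover F|%:R).
  apply: le_trans (rnd_leaf_failure invF large).
  set ok := [pred w | proper_col F (maxdeg F).+1 (rnd p (cover F) F w).1 &&
                      ((rnd p (cover F) F w).2%:R <= K2 * (maxdeg F)%:R ^+ 18 * #|cover F|%:R)].
  apply: le_trans (_ : Pr P (predC ok) <= _).
    apply: le_Pr => // w; rewrite /= /run_ok run0 large; cbv beta iota zeta.
    apply: contraNN => /andP[col cost].
    by rewrite col mulr0 add0r (le_trans cost (rnd_leaf_cost invF)).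
  by rewrite Pr_predC // lerBlDr addrC -lerBlDr; exact: rnd_spec.
have small : #|cover F|%:R < tau by rewrite ltNge large.
rewrite Pr_pred0; last first.
  move=> w; rewrite /= negbK /run_ok run0 large; cbv beta iota zeta.
  move: (det_spec simpleF F0) (det_leaf_cost invF small).
  case: (det (cover F) F) => phi cs [col cost] /= le_cost.
  by rewrite col mulr0 add0r (le_trans cost).
by rewrite invr_ge0 mulr_ge0 ?powR_ge0.
Qed.

Lemma level_inv0 : level_inv E 0 E.
Proof.
have [v degv] := maxdeg_attained (leq_trans (expn_gt0 2 h.+2) exp2_le_maxdeg).
rewrite /level_inv expn0 !muln1 subxx leq_addr leqnn /=.
by apply/existsP; exists v; rewrite muln1 degv.
Qed.

Lemma leaves_eps_le : 2 ^+ h * eps <= (powR n%:R c)^-1.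
Proof.
have [n2 Dn _] := card_bounds; have n0 : (0 : R) < n%:R by rewrite ltr0n; lia.
have hn : (2 ^ h <= n)%N.
  by apply: leq_trans Dn; apply: leq_trans exp2_le_maxdeg; rewrite leq_exp2l //; lia.
rewrite /eps invfM mulrA -[leRHS]mul1r ler_pM2r ?invr_gt0 ?powR_gt0 //.
by rewrite ler_pdivrMr // mul1r -natrX ler_nat.
Qed.

Lemma total_cost_le : (K1 * m%:R * h%:R + leaf_cost * m%:R : R) <=
  edge_coloring_const c K1 K2 K3 * (m%:R * D ^+ 18 + m%:R * h%:R).
Proof.
rewrite /edge_coloring_const /leaf_cost [leRHS]mulrDl.
have D0 : 0 <= D by have := D_ge4; lra.
apply: lerD.
  rewrite -mulrA; apply: le_trans (ler_wpM2r _ (ler_norm K1)) _; first by rewrite mulr_ge0.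
  by rewrite ler_wpM2l ?normr_ge0 // lerDr mulr_ge0 // exprn_ge0.
rewrite [leRHS](_ : _ = (2 ^+ 19 * `|K2| + `|K3| * loglog_const c) *
                        (D ^+ 18 + h%:R) * m%:R) //.
by ring.
Qed.

Lemma edge_coloring_whp :
  Pr P [pred w | let: (phi, _, cs) := edge_coloring split det rnd tau w [::] h [set: T] E in
                 proper_col E (Delta + 3 * 2 ^ h)%N phi &&
                 (cs%:R <= edge_coloring_const c K1 K2 K3 * (m%:R * D ^+ 18 + m%:R * h%:R))]
  >= 1 - (powR n%:R c)^-1.
Proof.
have fail := run_failure P_distr E_simple split_spec leaf_failure [::] (add0n h) level_inv0.
apply: le_trans (_ : Pr P (run_ok split det rnd tau K1 leaf_cost h [::] E) <= _).
  by move: fail; rewrite Pr_predC //; have := leaves_eps_le; lra.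
apply: le_Pr => // w.
have := run_palette det rnd tau E_simple split_spec [::] w (add0n h) level_inv0.
rewrite /= /run_ok /run E_cover; case: edge_coloring => [[phi pal] cs] /=.
rewrite expn0 muln1 => pal_le /andP[col cost]; rewrite (proper_col_widen pal_le col) /=.
exact: le_trans cost total_cost_le.
Qed.

End RandomizedEdgeColoring.

Theorem corollary3p10 :
  forall (R : realType) (c K1 K2 K3 : R), 0 < c ->
  exists K : R,
  forall (T : finType) (E : {set {set T}}) (Omega : finType)
         (P : {ffun Omega -> R})
         (split : {set T} -> {set {set T}} -> {set {set T}} * {set {set T}} * nat)
         (det : {set T} -> {set {set T}} -> ({set T} -> nat) * nat)
         (rnd : seq bool -> {set T} -> {set {set T}} -> Omega -> ({set T} -> nat) * nat)
         (h : nat),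
    let n := #|T| in
    let m := #|E| in
    let Delta := maxdeg E in
    let tau := (c + 1) * log2 (n%:R : R) in
    (* G = (T, E) is a simple graph without isolated vertices *)
    simple_graph [set: T] E ->
    cover E = [set: T] ->
    (* randomness: a probability distribution on a finite sample space *)
    is_distr P ->
    (* degree-splitting subroutine: discrepancy <= 2, balanced, O(|E(H)|) time *)
    (forall V F, simple_graph V F ->
       let: (F1, F2, cs) := split V F in
       [/\ degree_splitting F F1 F2 2, balanced_sizes F F1 F2
         & (cs%:R <= K1 * #|F|%:R :> R)]) ->
    (* deterministic base case: proper (Delta'+1)-coloring in O(m' Delta' log n') *)
    (forall V F, simple_graph V F -> F != set0 ->
       let: (phi, cs) := det V F in
       proper_col F (maxdeg F).+1 phi /\
       (cs%:R <= K3 * #|F|%:R * (maxdeg F)%:R * log2 (#|V|%:R) :> R)) ->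
    (* randomized base case: proper (Delta'+1)-coloring in O(Delta'^18 n')
       with probability >= 1 - Delta'^(-n') *)
    (forall p V F, simple_graph V F -> F != set0 ->
       Pr P [pred w | proper_col F (maxdeg F).+1 (rnd p V F w).1 &&
                      ((rnd p V F w).2%:R <= K2 * (maxdeg F)%:R ^+ 18 * #|V|%:R)]
       >= 1 - (maxdeg F)%:R ^- #|V|) ->
    (* range of h *)
    log2 (Delta%:R * log2 (log2 (n%:R)) / (4 * log2 (n%:R))) <= (h%:R : R) ->
    (h%:R : R) <= log2 (Delta%:R) - 2 ->
    Pr P [pred w |
      let: (phi, _, cs) := edge_coloring split det rnd tau w [::] h [set: T] E in
      proper_col E (Delta + 3 * 2 ^ h)%N phi &&
      (cs%:R <= K * (m%:R * (Delta%:R / 2 ^+ h) ^+ 18 + m%:R * h%:R))]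
    >= 1 - (powR (n%:R) c)^-1.

Proof.
move=> R c K1 K2 K3 c_gt0; exists (edge_coloring_const c K1 K2 K3).
move=> T E Omega P split det rnd h n m Delta tau E_simple E_cover P_distr split_spec det_spec
  rnd_spec _ h_le.
exact: edge_coloring_whp.
Qed.
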